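(* The map $J:\mathbb{D}\times\mathbb{D}\to\mathbb{CP}^3$ defined by $J(z,w)=(z-w:1-zw:i(1+zw):-i(z+w))$ is a biholomorphism from $\mathbb{D}\times\mathbb{D}$ onto $\mathcal{D}_1^{(2)}$.
   Context: $\mathbb{D}$ is the open unit disc in $\mathbb{C}$; points of $\mathbb{CP}^3$ are written in homogeneous coordinates $(s:t:u:v)$. The domain $\mathcal{D}_1^{(2)}\subset\mathbb{CP}^3$ is $\mathcal{D}_1^{(2)}=\{(1:t:u:v): |t|^2+|u|^2-|v|^2>1,\ t^2+u^2-v^2=1,\ \mathrm{Im}(u(\overline{t}+\overline{v}))>0\}\cup\{(0:t:u:v): t^2+u^2-v^2=0,\ \mathrm{Im}(u(\overline{t}+\overline{v}))>0\}$. *)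

From mathcomp Require Import all_boot all_order all_algebra.
From mathcomp Require Import all_classical all_reals all_analysis.
From mathcomp.real_closed Require Import complex.

(* the complex numbers R[i], in the guise (R[i])^o that carries the
   MathComp-Analysis topology / normed-module structure *)
Notation CC R := ((R[i])%C)^o.
Import Order.TTheory GRing.Theory Num.Theory.
Import numFieldTopology.Exports numFieldNormedType.Exports.
Set Implicit Arguments. Unset Strict Implicit. Unset Printing Implicit Defensive.
Local Open Scope ring_scope.
Local Open Scope complex_scope.
Local Open Scope classical_set_scope.

(* Points of C^n are row vectors 'rV[CC R]_n; they form a normed module over
   the field CC R of complex numbers, so [differentiable] below is complex
   (Frechet) differentiability, i.e. holomorphy. *)

Definition vec4 (R : realType) (s t u v : CC R) : 'rV[CC R]_4 :=
  \row_(k < 4) nth 0 [:: s; t; u; v] k.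

Definition proj_eq (R : realType) (p q : 'rV[CC R]_4) : Prop :=
  p != 0 /\ exists l : CC R, l != 0 /\ q = l *: p.

(* normalised representative in the k-th standard affine chart of CP^3
   (k-th coordinate equal to 1), meaningful when p 0 k != 0 *)
Definition chart (R : realType) (k : 'I_4) (p : 'rV[CC R]_4) : 'rV[CC R]_4 :=
  (p 0 k)^-1 *: p.

Definition bidisc (R : realType) : set 'rV[CC R]_2 :=
  [set a | `|a 0 0| < 1 /\ `|a 0 1| < 1].

(* the domain D_1^(2), as a (scaling invariant) set of representatives in C^4 *)
Definition D12 (R : realType) : set 'rV[CC R]_4 :=
  [set p | (exists t u v : CC R, proj_eq (vec4 1 t u v) p /\
              `|t| ^+ 2 + `|u| ^+ 2 - `|v| ^+ 2 > 1 /\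
              t ^+ 2 + u ^+ 2 - v ^+ 2 = 1 /\
              'Im (u * (t^* + v^*)) > 0)
        \/ (exists t u v : CC R, proj_eq (vec4 0 t u v) p /\
              t ^+ 2 + u ^+ 2 - v ^+ 2 = 0 /\
              'Im (u * (t^* + v^*)) > 0)].

(* the map J, given by its (nowhere vanishing) lift to C^4 *)
Definition Jlift (R : realType) (a : 'rV[CC R]_2) : 'rV[CC R]_4 :=
  let z := a 0 0 in let w := a 0 1 in
  vec4 (z - w) (1 - z * w) ('i * (1 + z * w)) (- 'i * (z + w)).

(* F : C^n -> C^4 \ {0} (a lift) defines a holomorphic map U -> CP^3:
   at each point, in every affine chart containing the image point, the
   affine coordinates are holomorphic *)
Definition holo_to_P3 (R : realType) (n : nat) (U : set 'rV[CC R]_n)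
    (F : 'rV[CC R]_n -> 'rV[CC R]_4) : Prop :=
  forall a, U a -> F a != 0 /\
    forall k : 'I_4, F a 0 k != 0 ->
      differentiable (fun b : 'rV[CC R]_n => chart k (F b) : 'rV[CC R]_4) a.

(* G, defined on representatives of points of S (a subset of CP^3), is
   holomorphic on S: near every point and in every affine chart, G is the
   restriction of a holomorphic function on an open subset of the chart *)
Definition holo_on_P3 (R : realType) (m : nat) (S : set 'rV[CC R]_4)
    (G : 'rV[CC R]_4 -> 'rV[CC R]_m) : Prop :=
  forall p, S p -> forall k : 'I_4, p 0 k != 0 ->
    exists V : set 'rV[CC R]_4, open V /\ V (chart k p) /\
      exists H : 'rV[CC R]_4 -> 'rV[CC R]_m,
        (forall x, V x -> differentiable H x) /\
        (forall q, S q -> q 0 k != 0 -> V (chart k q) -> G q = H (chart k q)).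

(* F is a biholomorphism from U onto S (subset of CP^3): holomorphic,
   maps U into S, injective (as a map to CP^3), and has a holomorphic
   inverse S -> U (which in particular makes it onto S) *)
Definition biholo_onto (R : realType) (n : nat) (U : set 'rV[CC R]_n)
    (F : 'rV[CC R]_n -> 'rV[CC R]_4) (S : set 'rV[CC R]_4) : Prop :=
  [/\ holo_to_P3 U F,
      (forall a, U a -> S (F a)),
      (forall a b, U a -> U b -> proj_eq (F a) (F b) -> a = b) &
      exists G : 'rV[CC R]_4 -> 'rV[CC R]_n,
        (forall p, S p -> U (G p) /\ proj_eq (F (G p)) p) /\
        holo_on_P3 S G].

From mathcomp Require Import all_boot all_order all_algebra.
From mathcomp Require Import all_classical all_reals all_analysis.
From mathcomp.real_closed Require Import complex.
From mathcomp.algebra_tactics Require Import ring lra.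
Import Order.TTheory GRing.Theory Num.Theory.
Import numFieldTopology.Exports numFieldNormedType.Exports.
Set Implicit Arguments. Unset Strict Implicit. Unset Printing Implicit Defensive.
Local Open Scope ring_scope.
Local Open Scope complex_scope.
Local Open Scope classical_set_scope.

(* Write p = (s, t, u, v) and I(p) = Im (u (conj t + conj v)).  Up to scaling,
   D12 is the cone of the p with Q(p) = t^2 + u^2 - v^2 - s^2 = 0, I(p) > 0, and
   either s = 0 or H(p) = |t|^2 + |u|^2 - |v|^2 - |s|^2 > 0.  On J(z, w) one has
   Q = 0, H = 2 (1 - |z|^2) (1 - |w|^2) and
   I = ((1 - |w|^2) |z + i|^2 + (1 - |z|^2) |w + i|^2) / 2,
   and a sign argument shows that J(z, w) lies in the cone iff |z|, |w| < 1.
   Conversely a point of the quadric Q = 0 with t - i u <> 0 is the multiple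
   (t - i u) / 2 of J(z, w) for z = (s + i v) / (t - i u), w = (i v - s) / (t - i u),
   a rational, hence holomorphic, function of p.  Finally t <> i u on the cone:
   t = i u forces s^2 = - v^2, hence |v| <= |u| in both cases, and then
   I(p) = Im (u conj v) - |u|^2 <= 0. *)

Lemma ord2_ind (P : 'I_2 -> Prop) : P 0 -> P 1 -> forall j, P j.
Proof.
move=> P0 P1 [[|[|//]] lt_j2].
- by rewrite (_ : Ordinal lt_j2 = 0) //; apply/val_inj.
- by rewrite (_ : Ordinal lt_j2 = 1) //; apply/val_inj.
Qed.

Lemma ord4_ind (P : 'I_4 -> Prop) : P 0 -> P 1 -> P 2 -> P 3 -> forall j, P j.
Proof.
move=> P0 P1 P2 P3 [[|[|[|[|//]]]] lt_j4].
- by rewrite (_ : Ordinal lt_j4 = 0) //; apply/val_inj.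
- by rewrite (_ : Ordinal lt_j4 = 1) //; apply/val_inj.
- by rewrite (_ : Ordinal lt_j4 = 2) //; apply/val_inj.
- by rewrite (_ : Ordinal lt_j4 = 3) //; apply/val_inj.
Qed.

Lemma cross_sum_gt0 (R : realDomainType) (a b A B : R) :
  0 <= A -> 0 <= B -> 0 < b * A + a * B -> 0 < a * b -> 0 < a /\ 0 < b.
Proof.
move=> A_ge0 B_ge0 S_gt0 ab_gt0.
have [a_gt0 | a_le0] := ltrP 0 a; first by rewrite -(pmulr_rgt0 _ a_gt0).
have b_lt0 : b < 0 by nra.
nra.
Qed.

Lemma differentiable_row (K : numFieldType) (V : normedModType K) m
    (F : V -> 'rV[K]_m) (x : V) :
  (forall j, differentiable (fun y => F y 0 j) x) -> differentiable F x.
Proof.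
move=> dF; have -> : F = \sum_(j < m) (fun y => F y 0 j *: ('e_j : 'rV[K]_m)).
  by apply/funext => y; rewrite fct_sumE {1}(row_sum_delta (F y)).
by apply: differentiable_sum => j; exact: differentiableZl.
Qed.

Lemma open_neq0 (T : topologicalType) (K : numFieldType) (W : normedModType K)
    (f : T -> W) :
  continuous f -> open [set x | f x != 0].
Proof.
move=> f_cont; rewrite (_ : [set x | f x != 0] = f @^-1` ~` [set 0]).
  apply: open_comp => [x _|]; first exact: f_cont.
  rewrite openC; apply: (iffLR accessible_finite_set_closed); last exact: finite_set1.
  exact/hausdorff_accessible/norm_hausdorff.
by apply/seteqP; split => x /eqP.
Qed.

Section ComplexSquaredNorm.
Variable R : rcfType.
Implicit Types x y : R[i].

Definition sqnorm x : R := complex.Re x ^+ 2 + complex.Im x ^+ 2.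

Lemma sqnormE x : `|x| ^+ 2 = (sqnorm x)%:C.
Proof. by rewrite add_Re2_Im2. Qed.

Lemma sqnorm_ge0 x : 0 <= sqnorm x.
Proof. by rewrite addr_ge0 ?sqr_ge0. Qed.

Lemma sqnorm_gt0 x : x != 0 -> 0 < sqnorm x.
Proof. by move=> x_neq0; rewrite -ltcR -sqnormE exprn_gt0 // normr_gt0. Qed.

Lemma sqnormM x y : sqnorm (x * y) = sqnorm x * sqnorm y.
Proof. by case: x y => [a b] [c d]; rewrite /sqnorm /=; ring. Qed.

Lemma sqnormJ x : sqnorm x^* = sqnorm x.
Proof. by case: x => a b; rewrite /sqnorm /= sqrrN. Qed.

Lemma sqnormN x : sqnorm (- x) = sqnorm x.
Proof. by case: x => a b; rewrite /sqnorm /= !sqrrN. Qed.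

Lemma sqnorm_i : sqnorm 'i = 1 :> R.
Proof. by rewrite /sqnorm /=; ring. Qed.

Lemma Im_sqr_le_sqnorm x : complex.Im x ^+ 2 <= sqnorm x.
Proof. by rewrite lerDr sqr_ge0. Qed.

Lemma sqnorm_lt1 x : (`|x| < 1) = (sqnorm x < 1).
Proof. by rewrite -(@expr_lt1 _ 2) // sqnormE ltcR. Qed.

Lemma sqnorm_addi_gt0 x : sqnorm x < 1 -> 0 < sqnorm (x + 'i).
Proof. by case: x => a b; rewrite /sqnorm /= => ?; nra. Qed.

Lemma ltr0c (r : R) : (0 < r%:C) = (0 < r).
Proof. by rewrite -ltcR. Qed.

Lemma sqr_i_regular : 'i ^+ 2 = -1 :> CC R.
Proof. exact: sqr_i. Qed.

End ComplexSquaredNorm.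

Section Cone.
Variable R : rcfType.
Implicit Types (p : 'rV[CC R]_4) (l : CC R).

Definition qform p : CC R := p 0 1 ^+ 2 + p 0 2 ^+ 2 - p 0 3 ^+ 2 - p 0 0 ^+ 2.

Definition hform p : R :=
  sqnorm (p 0 1) + sqnorm (p 0 2) - sqnorm (p 0 3) - sqnorm (p 0 0).

Definition iform p : R := complex.Im (p 0 2 * ((p 0 1)^* + (p 0 3)^*)).

Definition D12_cone p := [/\ qform p = 0, 0 < iform p & p 0 0 = 0 \/ 0 < hform p].

Lemma hformE p :
  (hform p)%:C = `|p 0 1| ^+ 2 + `|p 0 2| ^+ 2 - `|p 0 3| ^+ 2 - `|p 0 0| ^+ 2.
Proof. by rewrite !sqnormE /hform !rmorphB rmorphD. Qed.

Lemma iformE p : (iform p)%:C = 'Im (p 0 2 * ((p 0 1)^* + (p 0 3)^*)).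
Proof. exact: complexIm. Qed.

Lemma qformZ l p : qform (l *: p) = l ^+ 2 * qform p.
Proof. by rewrite /qform !mxE; ring. Qed.

Lemma hformZ l p : hform (l *: p) = sqnorm l * hform p.
Proof. by rewrite /hform !mxE !sqnormM; ring. Qed.

Lemma iformZ l p : iform (l *: p) = sqnorm l * iform p.
Proof.
rewrite /iform !mxE; move: l (p 0 1) (p 0 2) (p 0 3) => [a b] [c d] [e f] [g h].
by rewrite /sqnorm /=; ring.
Qed.

Lemma D12_coneZ l p : l != 0 -> D12_cone (l *: p) <-> D12_cone p.
Proof.
move=> l_neq0; have l_gt0 := sqnorm_gt0 l_neq0.
rewrite /D12_cone qformZ hformZ iformZ mxE !pmulr_rgt0 //.
split=> -[Q0 I_gt0 N_gt0]; split=> //.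
- by apply/eqP; move/eqP: Q0; rewrite mulf_eq0 expf_eq0 (negPf l_neq0).
- by case: N_gt0 => [/eqP|]; [rewrite mulf_eq0 (negPf l_neq0) => /eqP|]; auto.
- by rewrite Q0 mulr0.
- by case: N_gt0 => [->|]; [rewrite mulr0|]; auto.
Qed.

Lemma D12_cone_neq0 p : D12_cone p -> p != 0.
Proof.
case=> _ I_gt0 _; apply: contraTneq I_gt0 => ->.
by rewrite /iform !mxE mul0r /= ltxx.
Qed.

Definition Jden p : CC R := p 0 1 - 'i * p 0 2.

Lemma JdenZ l p : Jden (l *: p) = l * Jden p.
Proof. by rewrite /Jden !mxE; ring. Qed.

Lemma D12_cone_Jden_neq0 p : D12_cone p -> Jden p != 0.
Proof.
case=> Q0 I_gt0 N_gt0; apply: contraTneq I_gt0 => /subr0_eq t_iu; rewrite -leNgt.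
move: Q0 N_gt0; rewrite /qform /hform /iform t_iu.
move: (p 0 0) (p 0 2) (p 0 3) => s u v Q0 N_gt0.
have s_v : sqnorm s ^+ 2 = sqnorm v ^+ 2.
  have : ('i * u) ^+ 2 + u ^+ 2 - v ^+ 2 - s ^+ 2 = - (s ^+ 2 + v ^+ 2).
    by ring: (sqr_i_regular R).
  rewrite Q0 => /esym/eqP; rewrite oppr_eq0 addr_eq0 => /eqP s2.
  by rewrite !expr2 -!sqnormM -!expr2 s2 sqnormN.
have v_le_u : sqnorm v <= sqnorm u.
  have := sqnorm_ge0 s; have := sqnorm_ge0 v.
  case: N_gt0 => [s0|]; first by rewrite s0 /sqnorm /= in s_v *; nra.
  by rewrite sqnormM sqnorm_i mul1r; nra.
have -> : complex.Im (u * (('i * u)^* + v^*)) = complex.Im (u * v^*) - sqnorm u.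
  by case: (u) (v) => [a b] [c d]; rewrite /sqnorm /=; ring.
have := Im_sqr_le_sqnorm (u * v^*); rewrite sqnormM sqnormJ.
have := sqnorm_ge0 u; have := sqnorm_ge0 v; nra.
Qed.

(* On the image of J one has s = z - w, i v = z + w and t - i u = 2. *)
Definition Jinv p : 'rV[CC R]_2 :=
  \row_(j < 2) nth 0 [:: (p 0 0 + 'i * p 0 3) / Jden p; ('i * p 0 3 - p 0 0) / Jden p] j.

Lemma JinvZ l p : l != 0 -> Jinv (l *: p) = Jinv p.
Proof.
move=> l_neq0.
have lK x d : (l * x) / (l * d) = x / d by rewrite invfM mulrACA divff // mul1r.
by apply/rowP; elim/ord2_ind; rewrite !mxE /= JdenZ -[RHS]lK; congr (_ / _); ring.
Qed.

End Cone.

Section BidiscToD12.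
Variable R : realType.
Implicit Types (a : 'rV[CC R]_2) (p : 'rV[CC R]_4) (t u v : CC R).

Lemma vec4_eta p : p = vec4 (p 0 0) (p 0 1) (p 0 2) (p 0 3).
Proof. by apply/rowP; elim/ord4_ind; rewrite mxE. Qed.

Lemma D12_cone_vec4_1 t u v : D12_cone (vec4 1 t u v) <->
  `|t| ^+ 2 + `|u| ^+ 2 - `|v| ^+ 2 > 1 /\ t ^+ 2 + u ^+ 2 - v ^+ 2 = 1 /\
  'Im (u * (t^* + v^*)) > 0.
Proof.
rewrite /D12_cone -ltr0c -[0 < hform _]ltr0c hformE iformE /qform !mxE /=.
rewrite normr1 expr1n subr_gt0.
split=> [[/subr0_eq Q1 I_gt0 [/eqP|N_gt1]] | [N_gt1 [Q1 I_gt0]]].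
- by rewrite oner_eq0.
- by [].
- by split; rewrite ?Q1 ?subrr; auto.
Qed.

Lemma D12_cone_vec4_0 t u v : D12_cone (vec4 0 t u v) <->
  t ^+ 2 + u ^+ 2 - v ^+ 2 = 0 /\ 'Im (u * (t^* + v^*)) > 0.
Proof.
rewrite /D12_cone -ltr0c iformE /qform !mxE /= expr0n subr0.
by split=> [[]|[Q0 I_gt0]]; [|split; auto].
Qed.

Lemma D12P p : D12 p <-> D12_cone p.
Proof.
split.
  case=> -[t [u [v [[_ [l [l_neq0 ->]]] D12_tuv]]]].
  - by apply/D12_coneZ => //; apply/D12_cone_vec4_1.
  - by apply/D12_coneZ => //; apply/D12_cone_vec4_0.
move=> Dp; have [s0 | s_neq0] := eqVneq (p 0 0) 0.
  right; exists (p 0 1), (p 0 2), (p 0 3).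
  have <- : p = vec4 0 (p 0 1) (p 0 2) (p 0 3) by rewrite -s0 -vec4_eta.
  split; last by apply/D12_cone_vec4_0; rewrite -s0 -vec4_eta.
  by split; [exact: D12_cone_neq0 | exists 1; rewrite oner_neq0 scale1r].
left; exists (p 0 1 / p 0 0), (p 0 2 / p 0 0), (p 0 3 / p 0 0).
have p_vec4 : vec4 1 (p 0 1 / p 0 0) (p 0 2 / p 0 0) (p 0 3 / p 0 0) = (p 0 0)^-1 *: p.
  by apply/rowP; elim/ord4_ind; rewrite !mxE /= ?mulVf // mulrC.
split; last by apply/D12_cone_vec4_1; rewrite p_vec4 D12_coneZ ?invr_eq0.
split; first by rewrite p_vec4 scaler_eq0 invr_eq0 negb_or s_neq0 D12_cone_neq0.
by exists (p 0 0); rewrite s_neq0 p_vec4 scalerA mulfV // scale1r.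
Qed.

Lemma qform_Jlift a : qform (Jlift a) = 0.
Proof. by rewrite /qform !mxE /=; ring: (sqr_i_regular R). Qed.

Lemma hform_Jlift a :
  hform (Jlift a) = 2 * (1 - sqnorm (a 0 0)) * (1 - sqnorm (a 0 1)).
Proof.
rewrite /hform !mxE /=; case: (a 0 0) (a 0 1) => [x y] [x' y'].
by rewrite /sqnorm /=; ring.
Qed.

Lemma iform_Jlift a : iform (Jlift a) =
  ((1 - sqnorm (a 0 1)) * sqnorm (a 0 0 + 'i) +
   (1 - sqnorm (a 0 0)) * sqnorm (a 0 1 + 'i)) / 2.
Proof.
rewrite /iform !mxE /=; case: (a 0 0) (a 0 1) => [x y] [x' y'].
by rewrite /sqnorm /=; field.
Qed.

Lemma D12_cone_JliftP a : D12_cone (Jlift a) <-> bidisc a.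
Proof.
rewrite /D12_cone /bidisc qform_Jlift hform_Jlift iform_Jlift !mxE /= !sqnorm_lt1.
rewrite pmulr_lgt0 ?invr_gt0 ?ltr0n //.
move: (a 0 0) (a 0 1) => z w.
have := sqnorm_ge0 (z + 'i); have := sqnorm_ge0 (w + 'i).
split=> [[_ I_gt0 [/subr0_eq zw | N_gt0]] | [z_lt1 w_lt1]].
- by rewrite zw in I_gt0 *; split; nra.
- rewrite -[sqnorm z < 1]subr_gt0 -[sqnorm w < 1]subr_gt0.
  by apply: cross_sum_gt0 I_gt0 _; rewrite // -(pmulr_rgt0 _ (ltr0n _ 2)) mulrA.
- have := sqnorm_addi_gt0 z_lt1; split; [by [] | by nra | by right; nra].
Qed.

Lemma Jden_Jlift a : Jden (Jlift a) = 2.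
Proof. by rewrite /Jden !mxE /=; ring: (sqr_i_regular R). Qed.

Lemma Jinv_Jlift a : Jinv (Jlift a) = a.
Proof.
apply/rowP; elim/ord2_ind; rewrite !mxE /= Jden_Jlift.
all: by field: (sqr_i_regular R).
Qed.

Lemma Jlift_Jinv p : qform p = 0 -> Jden p != 0 -> p = (Jden p / 2) *: Jlift (Jinv p).
Proof.
move=> /eqP; rewrite subr_eq0 => /eqP/esym s2 d_neq0.
apply/rowP; elim/ord4_ind; rewrite !mxE /=; move: d_neq0; rewrite /Jden => d_neq0.
all: by field: (sqr_i_regular R) s2.
Qed.

Lemma D12_Jinv p : D12 p -> bidisc (Jinv p) /\ proj_eq (Jlift (Jinv p)) p.
Proof.
move=> /D12P Dp; have [Q0 _ _] := Dp; have d_neq0 := D12_cone_Jden_neq0 Dp.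
have c_neq0 : Jden p / 2 != 0 by rewrite mulf_neq0 ?invr_eq0 ?pnatr_eq0.
have p_J := Jlift_Jinv Q0 d_neq0.
have DJ : D12_cone (Jlift (Jinv p)) by rewrite -(D12_coneZ _ c_neq0) -p_J.
split; first exact/D12_cone_JliftP.
by split; [exact: D12_cone_neq0 | exists (Jden p / 2)].
Qed.

Local Ltac differentiable_poly :=
  repeat first [ exact: differentiable_coord | exact: differentiable_cst
               | apply: differentiableB | apply: differentiableD
               | apply: differentiableN | apply: differentiableM ].

Lemma differentiable_chart n (F : 'rV[CC R]_n -> 'rV[CC R]_4) (k : 'I_4) x :
  differentiable F x -> F x 0 k != 0 -> differentiable (fun y => chart k (F y)) x.
Proof.
move=> dF Fxk_neq0.
have dF_ j : differentiable (fun y => F y 0 j) x.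
  exact: (differentiable_comp dF (differentiable_coord _ 0 j)).
apply: differentiable_row => j; under eq_fun do rewrite mxE.
by apply: differentiableM; [apply: differentiableV | ].
Qed.

Lemma differentiable_Jlift a : differentiable (@Jlift R) a.
Proof.
apply: differentiable_row; elim/ord4_ind; under eq_fun do rewrite mxE /=.
all: by differentiable_poly.
Qed.

Lemma differentiable_Jinv p : Jden p != 0 -> differentiable (@Jinv R) p.
Proof.
move=> d_neq0; have dJden : differentiable (@Jden R) p by differentiable_poly.
apply: differentiable_row; elim/ord2_ind; under eq_fun do rewrite mxE /=.
all: by apply: differentiableM; [differentiable_poly | apply: differentiableV].
Qed.

Lemma holo_Jlift : holo_to_P3 (@bidisc R) (@Jlift R).
Proof.
move=> a /D12_cone_JliftP/D12_cone_neq0 Ja_neq0; split=> // k.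
exact: differentiable_chart (differentiable_Jlift a).
Qed.

Lemma holo_Jinv : holo_on_P3 (@D12 R) (@Jinv R).
Proof.
move=> p /D12P Dp k pk_neq0; exists [set x | Jden x != 0]; split.
  apply: open_neq0 => x; apply: differentiable_continuous.
  by differentiable_poly.
split; first by rewrite /= /chart JdenZ mulf_neq0 ?invr_eq0 ?D12_cone_Jden_neq0.
exists (@Jinv R); split; first exact: differentiable_Jinv.
by move=> q _ qk_neq0 _; rewrite /chart JinvZ ?invr_eq0.
Qed.

End BidiscToD12.

Theorem theorem4p8 (R : realType) :
  biholo_onto (@bidisc R) (@Jlift R) (@D12 R).
Proof.
split.
- exact: holo_Jlift.
- by move=> a /D12_cone_JliftP/D12P.
- move=> a b _ _ [_ [l [l_neq0 Jb]]].
  by rewrite -[LHS]Jinv_Jlift -[RHS]Jinv_Jlift Jb JinvZ.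
- by exists (@Jinv R); split; [exact: D12_Jinv | exact: holo_Jinv].
Qed.
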